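(* Let $\mathcal{S}=\{(x_i,y_i)\}_{i=1}^N$ be a training set, $K$ a continuous, real-valued, symmetric, shift-invariant positive definite kernel on $\mathbb{R}^d$ with RKHS $\mathcal{H}$ and spectral probability measure $\mathbb{P}(\omega)$, $\lambda>0$, $L(u,y)$ a loss convex in $u$ with $|L'(u,y)|<M$ (derivative in the first argument), $L$ and $L'$ $\mathcal{L}$-Lipschitz in the first argument, $K(x,x')\le\kappa$ for all $x,x'$, and $|\phi_\omega(x)\phi_\omega(x')|\le\phi$ for all $\omega,b,x,x'$. Let $f_t,h_t$ be the sequences defined in the context with constant step size $\gamma$ satisfying $\frac{1}{\lambda}>\gamma>0$. Then for any $x$, $$\mathbb{E}\big[|f_{t+1}(x)-h_{t+1}(x)|^2\big]\le C^2,\qquad C^2:=M^2(\sqrt{\kappa}+\sqrt{\phi})^2\gamma/\lambda.$$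
   Context: Random feature map: $\phi_\omega(x)=\sqrt{2}\cos(\omega^Tx+b)$ with $\omega\sim\mathbb{P}(\omega)$, $b\sim U[0,2\pi]$, so that $K(x,x')=\mathbb{E}_{\omega,b}[\phi_\omega(x)\phi_\omega(x')]$. Iterations: $f_1=h_1=0$; at iteration $t$ draw $(x_t,y_t)$ uniformly from $\mathcal{S}$ and $(\omega_t,b_t)$ independently, and set $f_{t+1}=f_t-\gamma\big(L'(f_t(x_t),y_t)\phi_{\omega_t}(x_t)\phi_{\omega_t}(\cdot)+\lambda f_t\big)$ and $h_{t+1}=h_t-\gamma\big(L'(f_t(x_t),y_t)K(x_t,\cdot)+\lambda h_t\big)$. The expectation is over all sampled data points and random features up to iteration $t$. *)

From HB Require Import structures.
From mathcomp Require Import all_boot all_order all_algebra.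
From mathcomp Require Import all_classical all_reals all_analysis.
Set Implicit Arguments. Unset Strict Implicit. Unset Printing Implicit Defensive.
Import Order.TTheory GRing.Theory Num.Theory.
Import numFieldNormedType.Exports.
Local Open Scope classical_set_scope.
Local Open Scope ring_scope.

Section RandomFeatures.
Variables (R : realType) (d N : nat).

(* points x of R^d are row vectors; frequencies omega are d-tuples
   (d.-tuple R carries the product Borel sigma-algebra in mathcomp-analysis) *)
Definition dotp (w : d.-tuple R) (x : 'rV[R]_d) : R :=
  \sum_(k < d) tnth w k * x ord0 k.

Definition rff (w : d.-tuple R) (b : R) (x : 'rV[R]_d) : R :=
  Num.sqrt 2 * cos (dotp w x + b).

(* one random draw at an iteration: data index, omega, b *)
Definition sample := ('I_N * (d.-tuple R * R))%type.

Variables (xs : 'I_N -> 'rV[R]_d) (ys : 'I_N -> R)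
  (dL : R -> R -> R) (K : 'rV[R]_d -> 'rV[R]_d -> R) (gamma lambda : R).

Definition step (fh : ('rV[R]_d -> R) * ('rV[R]_d -> R)) (z : sample)
  : ('rV[R]_d -> R) * ('rV[R]_d -> R) :=
  let: (f, h) := fh in
  let: (i, (w, b)) := z in
  let g := dL (f (xs i)) (ys i) in
  (fun x => f x - gamma * (g * rff w b (xs i) * rff w b x + lambda * f x),
   fun x => h x - gamma * (g * K (xs i) x + lambda * h x)).

(* iterates s = (f_{t+1}, h_{t+1}) where s = [:: z_1; ...; z_t] is the
   chronological list of draws; iterates [::] = (f_1, h_1) = (0, 0) *)
Definition iterates (s : seq sample) : ('rV[R]_d -> R) * ('rV[R]_d -> R) :=
  foldl step (fun _ => 0, fun _ => 0) s.

End RandomFeatures.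

Section Expectation.
Local Open Scope ereal_scope.
Variables (R : realType) (d N : nat) (P : probability (d.-tuple R) R).

Definition Eunif (g : R -> \bar R) : \bar R :=
  ((2 * pi)^-1)%:E * \int[lebesgue_measure]_(b in `[0%R, (2 * pi)%R]) g b.

(* Expectation of F over t i.i.d. draws (i_j, omega_j, b_j), j = 1..t, with
   i_j uniform on {1..N}, omega_j ~ P, b_j ~ U[0,2pi], all independent:
   the iterated integral of the product measure (first draw outermost). *)
Fixpoint Eiter (t : nat) (F : seq (sample R d N) -> \bar R) : \bar R :=
  if t is t'.+1 then
    (N%:R^-1)%:E * \sum_(i < N)
      \int[P]_w Eunif (fun b => Eiter t' (fun s => F ((i, (w, b)) :: s)))
  else F [::].

End Expectation.

From HB Require Import structures.
From mathcomp Require Import all_boot all_order all_algebra.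
From mathcomp Require Import all_classical all_reals all_analysis.
From mathcomp Require Import ring lra.
Import Order.TTheory GRing.Theory Num.Theory.
Import numFieldNormedType.Exports.
Local Open Scope classical_set_scope.
Local Open Scope ring_scope.

(* Write e_t := f_t(x) - h_t(x).  One iteration gives
     e_{t+1} = (1 - gamma lambda) e_t - gamma L'_t (phi_w(x_t) phi_w(x) - K(x_t, x)),
   and the last factor has mean zero over the fresh feature (w, b), because K is
   the expectation of phi_w phi_w.  Its second moment is at most
   E[phi_w(x_t)^2 phi_w(x)^2] <= 2 E[phi_w(x)^2] = 2, so with rho = (1 - gamma lambda)^2
     E[e_{t+1}^2] <= rho E[e_t^2] + 2 gamma^2 M^2.
   Since e_1 = 0, this keeps E[e_t^2] below any C^2 with 2 gamma^2 M^2 <= C^2 (1 - rho),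
   and the stated C^2 qualifies because (sqrt kappa + sqrt phi)^2 >= phi >= 2. *)

Section ge0_le_integral_nonmeasurable.
Local Open Scope ereal_scope.
Context d (T : measurableType d) (R : realType) (mu : {measure set T -> \bar R}).

(* The integral of a nonnegative function is a supremum over simple minorants,
   hence monotone even for nonmeasurable integrands such as those of [Eiter]. *)
Lemma ge0_le_integral_nonmeasurable (D : set T) (f g : T -> \bar R) :
  (forall x, D x -> 0 <= f x) -> (forall x, D x -> f x <= g x) ->
  \int[mu]_(x in D) f x <= \int[mu]_(x in D) g x.
Proof.
move=> f0 fg; rewrite !ge0_integralE //; last first.
  by move=> x Dx; exact: le_trans (f0 x Dx) (fg x Dx).
apply: le_ereal_sup => _ [h hf <-]; exists h => //= t.
apply: le_trans (hf t) _; rewrite /patch; case: ifPn => // /set_mem Dt.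
exact: fg.
Qed.

End ge0_le_integral_nonmeasurable.

Local Notation phases := [set` `[0%R, (2 * pi)%R]].

Section uniform_phase.
Context {R : realType}.

Lemma twopi_gt0 : 0 < 2 * pi :> R.
Proof. by rewrite mulr_gt0 // pi_gt0. Qed.

Lemma Eunif_ge0 (f : R -> \bar R) : (forall b, 0 <= f b)%E -> (0 <= Eunif f)%E.
Proof.
move=> f0; apply: mule_ge0; first by rewrite lee_fin invr_ge0 ltW // twopi_gt0.
exact: integral_ge0.
Qed.

Lemma le_Eunif (f g : R -> \bar R) :
  (forall b, 0 <= f b)%E -> (forall b, f b <= g b)%E -> (Eunif f <= Eunif g)%E.
Proof.
move=> f0 fg; apply: lee_wpmul2l; first by rewrite lee_fin invr_ge0 ltW // twopi_gt0.
exact: ge0_le_integral_nonmeasurable.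
Qed.

Lemma continuous_cos_shift (c : R) : continuous (fun b => cos (c + b)).
Proof.
move=> b; apply: continuous_comp; last exact: continuous_cos.
by apply: cvgD; [exact: cvg_cst | exact: cvg_id].
Qed.

Lemma integrable_phases_cst (A : R) :
  lebesgue_measure.-integrable phases (fun=> A%:E).
Proof.
apply: (@continuous_compact_integrable R (fun=> A)); first exact: segment_compact.
by apply: continuous_subspaceT => b; exact: cvg_cst.
Qed.

Lemma integral_phases_cst (A : R) :
  (\int[lebesgue_measure]_(b in phases) A%:E)%E = (A * (2 * pi))%:E.
Proof.
rewrite integral_cst //= lebesgue_measure_itv /= lte_fin twopi_gt0.
by rewrite -EFinB subr0.
Qed.

Lemma integral_phases_cos_product (u v : R) :
  (\int[lebesgue_measure]_(b in phases) (2 * (cos (u + b) * cos (v + b)))%:E)%E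
  = (2 * pi * cos (u - v))%:E.
Proof.
(* antiderivative b cos(u - v) + sin(u + b) cos(v + b), with sinD and cosD
   expanded so that [is_derive_eq] can differentiate it *)
pose F : R -> R := (fun b => b * cos (u - v)) +
  (cst (sin u) * cos + cst (cos u) * sin) * (cst (cos v) * cos - cst (sin v) * sin).
have dF (b : R) : is_derive b 1 F (cos (u - v) +
    ((sin u * cos b + cos u * sin b) * (cos v * - sin b - sin v * cos b) +
     (cos v * cos b - sin v * sin b) * (sin u * - sin b + cos u * cos b))).
  by apply: is_derive_eq; rewrite /= !scaler0 !addr0 /GRing.scale /= add0r mulr1.
have cF : continuous F.
  by move=> b; apply: differentiable_continuous; apply/derivable1_diffP; have [] := dF b.
rewrite (@continuous_FTC2 _ _ F) ?twopi_gt0 //.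
- rewrite /F -EFinB; congr EFin.
  by rewrite !fctE /= mulr_natl cos2pi sin2pi cos0 sin0; ring.
- apply: continuous_subspaceT => b; apply: cvgM; first exact: cvg_cst.
  by apply: cvgM; exact: continuous_cos_shift.
- split; first by move=> b _; have [] := dF b.
  + exact: cvg_at_right_filter (cF 0).
  + exact: cvg_at_left_filter (cF _).
- move=> b _; rewrite derive1E (@derive_val _ _ _ _ _ _ _ (dF b)) !cosD cosN sinN.
  transitivity ((cos u * cos v - sin u * - sin v) * (cos b ^+ 2 + sin b ^+ 2) +
    ((sin u * cos b + cos u * sin b) * (cos v * - sin b - sin v * cos b) +
     (cos v * cos b - sin v * sin b) * (sin u * - sin b + cos u * cos b))).
    by rewrite cos2Dsin2 mulr1.
  ring.
Qed.

End uniform_phase.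

Section random_features.
Context {R : realType} {d : nat}.
Implicit Types (w : d.-tuple R) (a c : 'rV[R]_d).

Lemma continuous_rff_phase w a : continuous (fun b => rff w b a).
Proof.
by move=> b; apply: cvgM; [exact: cvg_cst | exact: continuous_cos_shift].
Qed.

Lemma integrable_rff_product w a a' :
  lebesgue_measure.-integrable phases (fun b => (rff w b a * rff w b a')%:E).
Proof.
apply: (@continuous_compact_integrable R (fun b => rff w b a * rff w b a')).
  exact: segment_compact.
by apply: continuous_subspaceT => b; apply: cvgM; exact: continuous_rff_phase.
Qed.

Lemma integral_rff_product w a a' :
  (\int[lebesgue_measure]_(b in phases) (rff w b a * rff w b a')%:E)%E
  = (2 * pi * cos (dotp w a - dotp w a'))%:E.
Proof.
rewrite -integral_phases_cos_product; apply: eq_integral => b _; congr EFin.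
by rewrite /rff mulrACA -expr2 sqr_sqrtr.
Qed.

Lemma Eunif_rff_product w a a' :
  Eunif (fun b => (rff w b a * rff w b a')%:E) = (cos (dotp w a - dotp w a'))%:E.
Proof.
rewrite /Eunif integral_rff_product -EFinM mulrA mulVf ?mul1r //.
by rewrite gt_eqF // twopi_gt0.
Qed.

Lemma Eunif_rff_affine w a a' c c' (A B C : R) :
  Eunif (fun b => (A + B * (rff w b a * rff w b a') + C * (rff w b c * rff w b c'))%:E)
  = (A + B * cos (dotp w a - dotp w a') + C * cos (dotp w c - dotp w c'))%:E.
Proof.
have iZ B' a1 a2 : lebesgue_measure.-integrable phases
    (fun b => (B'%:E * (rff w b a1 * rff w b a2)%:E)%E).
  by apply: integrableZl => //; exact: integrable_rff_product.
rewrite /Eunif (_ : (fun b => _) = (fun b => A%:E + B%:E * (rff w b a * rff w b a')%:E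
                                     + C%:E * (rff w b c * rff w b c')%:E)%E); last first.
  by apply/funext => b; rewrite -!EFinM -!EFinD.
rewrite integralD //; last by apply: integrableD => //; exact: integrable_phases_cst.
rewrite integralD //; last exact: integrable_phases_cst.
rewrite !integralZl //; try exact: integrable_rff_product.
rewrite !integral_rff_product integral_phases_cst -!EFinM; congr EFin.
have := @twopi_gt0 R; move: (2 * pi) => p p_gt0.
by field; rewrite gt_eqF.
Qed.

Lemma rff_sqr_le2 w b a : rff w b a ^+ 2 <= 2.
Proof. by rewrite /rff exprMn sqr_sqrtr // ler_piMr // cos_sqr_le1. Qed.

Lemma rff_product_bound_ge2 (phib : R) :
  (forall w b a a', `|rff w b a * rff w b a'| <= phib) -> 2 <= phib.
Proof.
move=> bound; pose w0 := [tuple (0 : R) | _ < d].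
have := bound w0 (- dotp w0 0) 0 0.
by rewrite /rff addrN cos0 mulr1 -expr2 sqr_sqrtr // ger0_norm.
Qed.

Lemma measurable_dotp a : measurable_fun [set: d.-tuple R] (fun w => dotp w a).
Proof.
apply: measurable_sum => k; apply: measurable_realfun.measurable_funM.
  exact: measurable_tnth.
exact: measurable_cst.
Qed.

Variable P : probability (d.-tuple R) R.

Definition Efeature (F : d.-tuple R -> R -> \bar R) : \bar R :=
  (\int[P]_w Eunif (F w))%E.

Lemma integral_cos_dotp_affine a a' (A B k : R) :
  k%:E = (\int[P]_w (cos (dotp w a - dotp w a'))%:E)%E ->
  (\int[P]_w (A + B * cos (dotp w a - dotp w a'))%:E)%E = (A + B * k)%:E.
Proof.
move=> k_def.
have icos : P.-integrable setT (EFin \o (fun w => cos (dotp w a - dotp w a'))).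
  apply: measurable_bounded_integrable => //.
  - by rewrite (le_lt_trans (probability_le1 P measurableT)) ?ltry.
  - apply: (@measurableT_comp _ _ _ _ _ _ (@cos R)).
      by apply: measurable_realfun.continuous_measurable_fun; exact: continuous_cos.
    by apply: measurable_realfun.measurable_funB; exact: measurable_dotp.
  - exists 1; split => // z z1 w _ /=.
    by rewrite (le_trans (cos_max _)) // ltW // (le_lt_trans _ z1) // ler_norm.
under eq_integral do rewrite EFinD EFinM.
rewrite integralD //; last 2 first.
- exact: finite_measure_integrable_cst.
- exact: integrableZl.
rewrite integral_cst //.
have ->: (A%:E * P [set: d.-tuple R])%E = A%:E by rewrite probability_setT mule1.
by rewrite integralZl // -k_def -EFinM -EFinD.
Qed.

(* [q] and [r] let the bound pass through the affine majorant supplied by the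
   induction on [Eiter]. *)
Lemma Efeature_sqr_le a x (q r al be k : R) :
  k%:E = Efeature (fun w b => (rff w b a * rff w b x)%:E) -> 0 <= q -> 0 <= r ->
  (Efeature (fun w b => (q * (al + be * (rff w b a * rff w b x - k)) ^+ 2 + r)%:E)
   <= (q * (al ^+ 2 + 2 * be ^+ 2) + r)%:E)%E.
Proof.
move=> k_def q0 r0.
have k_cos : k%:E = (\int[P]_w (cos (dotp w a - dotp w x))%:E)%E.
  by rewrite k_def; apply: eq_integral => w _; rewrite Eunif_rff_product.
pose A := q * (al - be * k) ^+ 2 + r.
pose B := 2 * q * be * (al - be * k).
pose C := 2 * q * be ^+ 2.
have pointwise w b : q * (al + be * (rff w b a * rff w b x - k)) ^+ 2 + r <=
    A + B * (rff w b a * rff w b x) + C * (rff w b x * rff w b x).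
  (* [rff a ^+ 2 <= 2] turns the square into an affine combination of two feature
     products, whose expectations are K(a, x) and 1 *)
  rewrite -subr_ge0.
  have -> : A + B * (rff w b a * rff w b x) + C * (rff w b x * rff w b x) -
      (q * (al + be * (rff w b a * rff w b x - k)) ^+ 2 + r) =
      q * be ^+ 2 * ((2 - rff w b a ^+ 2) * rff w b x ^+ 2) by rewrite /A /B /C; ring.
  apply: mulr_ge0; first exact: mulr_ge0 q0 (sqr_ge0 be).
  by apply: mulr_ge0 (sqr_ge0 _); rewrite subr_ge0 rff_sqr_le2.
apply: (@le_trans _ _ (\int[P]_w (A + C + B * cos (dotp w a - dotp w x))%:E)%E).
  apply: ge0_le_integral_nonmeasurable => w _.
    by apply: Eunif_ge0 => b; rewrite lee_fin addr_ge0 // mulr_ge0 // sqr_ge0.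
  have -> : A + C + B * cos (dotp w a - dotp w x) =
      A + B * cos (dotp w a - dotp w x) + C * cos (dotp w x - dotp w x).
    by rewrite subrr cos0; ring.
  rewrite -Eunif_rff_affine; apply: le_Eunif => b; last by rewrite lee_fin pointwise.
  by rewrite lee_fin addr_ge0 // mulr_ge0 // sqr_ge0.
rewrite (integral_cos_dotp_affine _ _ _ _ _ k_cos) lee_fin -subr_ge0.
have -> : q * (al ^+ 2 + 2 * be ^+ 2) + r - (A + C + B * k) = q * (be * k) ^+ 2.
  by rewrite /A /B /C; ring.
by rewrite mulr_ge0 // sqr_ge0.
Qed.

End random_features.

Section Eiter_bounds.
Local Open Scope ereal_scope.
Variables (R : realType) (d N : nat) (P : probability (d.-tuple R) R).
Implicit Types (F : seq (sample R d N) -> \bar R).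

Lemma Eiter_ge0 t F : (forall s, 0 <= F s) -> 0 <= Eiter P t F.
Proof.
elim: t F => [|t IH] F F0 //=.
apply: mule_ge0; first by rewrite lee_fin invr_ge0.
apply: sume_ge0 => i _; apply: integral_ge0 => w _.
by apply: Eunif_ge0 => b; exact: IH.
Qed.

Lemma Eiter_succ_le t F (B : R) : (0 < N)%N ->
  (forall i, Efeature P (fun w b => Eiter P t (fun s => F ((i, (w, b)) :: s))) <= B%:E) ->
  Eiter P t.+1 F <= B%:E.
Proof.
move=> N_gt0 FB; apply: (@le_trans _ _ ((N%:R^-1)%:E * \sum_(i < N) B%:E)).
  apply: lee_wpmul2l; first by rewrite lee_fin invr_ge0.
  by apply: lee_sum => i _; exact: FB.
rewrite sumEFin sumr_const card_ord -EFinM -[(B *+ N)%R]mulr_natl mulrA mulVf ?mul1r //.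
by rewrite pnatr_eq0 -lt0n.
Qed.

End Eiter_bounds.

Lemma sgd_noise_le (R : realFieldType) (gamma lambda M S g : R) :
  0 < lambda -> 0 < gamma -> gamma * lambda < 1 -> 2 <= S -> `|g| < M ->
  2 * gamma ^+ 2 * g ^+ 2 <= M ^+ 2 * S * gamma / lambda * (1 - (1 - gamma * lambda) ^+ 2).
Proof.
move=> lambda_gt0 gamma_gt0 gl_lt1 S_ge2 g_lt.
have -> : M ^+ 2 * S * gamma / lambda * (1 - (1 - gamma * lambda) ^+ 2) =
    gamma ^+ 2 * (M ^+ 2 * (S * (2 - gamma * lambda))).
  by field; rewrite gt_eqF.
have g2_le : g ^+ 2 <= M ^+ 2.
  rewrite -real_normK ?num_real //; have := normr_ge0 g; nra.
have S_ge : 2 <= S * (2 - gamma * lambda) by nra.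
rewrite -mulrA mulrCA ler_wpM2l ?sqr_ge0 //; nra.
Qed.

Section sgd_gap.
Variables (R : realType) (d N : nat) (P : probability (d.-tuple R) R).
Variables (xs : 'I_N -> 'rV[R]_d) (ys : 'I_N -> R) (dL : R -> R -> R)
  (K : 'rV[R]_d -> 'rV[R]_d -> R) (gamma lambda : R) (x : 'rV[R]_d).

Local Notation step := (step xs ys dL K gamma lambda).
Local Notation rho := ((1 - gamma * lambda) ^+ 2).
Local Notation gap fh := (fh.1 x - fh.2 x).

Lemma gap_step fh i w b : gap (step fh (i, (w, b))) =
  (1 - gamma * lambda) * gap fh +
  - gamma * dL (fh.1 (xs i)) (ys i) * (rff w b (xs i) * rff w b x - K (xs i) x).
Proof. by case: fh => f h /=; ring. Qed.

Variable C : R.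
Hypotheses (N_gt0 : (0 < N)%N)
  (K_feature : forall a, (K a x)%:E = Efeature P (fun w b => (rff w b a * rff w b x)%:E))
  (rho_le1 : rho <= 1) (C_ge0 : 0 <= C)
  (noise_le : forall u y, 2 * gamma ^+ 2 * dL u y ^+ 2 <= C * (1 - rho)).

(* [Eiter] integrates the first draw outermost, so the induction on the number of
   draws has to range over all starting pairs [fh]. *)
Lemma Eiter_sqr_gap_le t fh :
  (Eiter P t (fun s => (`|gap (foldl step fh s)| ^+ 2)%:E)
   <= (rho ^+ t * gap fh ^+ 2 + C * (1 - rho ^+ t))%:E)%E.
Proof.
elim: t fh => [|t IH] fh.
  by rewrite /= expr0 mul1r subrr mulr0 addr0 real_normK ?num_real.
apply: Eiter_succ_le => // i.
set al := (1 - gamma * lambda) * gap fh.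
set be := - gamma * dL (fh.1 (xs i)) (ys i).
have rt_ge0 : 0 <= rho ^+ t by rewrite exprn_ge0 // sqr_ge0.
have rt_le1 : rho ^+ t <= 1 by rewrite exprn_ile1 // sqr_ge0.
apply: (@le_trans _ _ (Efeature P (fun w b => (rho ^+ t *
    (al + be * (rff w b (xs i) * rff w b x - K (xs i) x)) ^+ 2 + C * (1 - rho ^+ t))%:E))).
  apply: ge0_le_integral_nonmeasurable => w _.
    by apply: Eunif_ge0 => b; apply: Eiter_ge0 => s; rewrite lee_fin sqr_ge0.
  apply: le_Eunif => b; first by apply: Eiter_ge0 => s; rewrite lee_fin sqr_ge0.
  by rewrite (le_trans (IH _)) // gap_step.
apply: le_trans (Efeature_sqr_le _ _ _ _ _ _ _ _ (K_feature (xs i)) rt_ge0 _) _.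
  by rewrite mulr_ge0 // subr_ge0.
rewrite lee_fin -subr_ge0.
have -> : rho ^+ t.+1 * gap fh ^+ 2 + C * (1 - rho ^+ t.+1) -
    (rho ^+ t * (al ^+ 2 + 2 * be ^+ 2) + C * (1 - rho ^+ t)) =
    rho ^+ t * (C * (1 - rho) - 2 * gamma ^+ 2 * dL (fh.1 (xs i)) (ys i) ^+ 2).
  by rewrite /al /be exprS; ring.
by rewrite mulr_ge0 // subr_ge0.
Qed.

Lemma Eiter_sqr_gap_iterates_le t :
  (Eiter P t (fun s => (`|gap (iterates xs ys dL K gamma lambda s)| ^+ 2)%:E) <= C%:E)%E.
Proof.
apply: le_trans (Eiter_sqr_gap_le t (fun=> 0, fun=> 0)) _.
rewrite /= subrr expr0n mulr0 add0r lee_fin ler_piMr // lerBlDr lerDl.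
by rewrite exprn_ge0 // sqr_ge0.
Qed.

End sgd_gap.

Theorem lemma3 (R : realType) (d N : nat)
  (xs : 'I_N -> 'rV[R]_d) (ys : 'I_N -> R)
  (K : 'rV[R]_d -> 'rV[R]_d -> R) (P : probability (d.-tuple R) R)
  (L dL : R -> R -> R) (lambda gamma M Lc kappa phib : R) :
  (0 < N)%N ->
  (* K: continuous, symmetric, shift-invariant, positive definite kernel *)
  continuous (fun p : 'rV[R]_d * 'rV[R]_d => K p.1 p.2) ->
  (forall x x', K x x' = K x' x) ->
  (exists k : 'rV[R]_d -> R, forall x x', K x x' = k (x - x')) ->
  (forall (n : nat) (z : 'I_n -> 'rV[R]_d) (c : 'I_n -> R),
      0 <= \sum_(i < n) \sum_(j < n) c i * c j * K (z i) (z j)) ->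
  (* P is the spectral probability measure: K = E_{omega,b}[phi phi] *)
  (forall x x', (K x x')%:E =
      (\int[P]_w Eunif (fun b => (rff w b x * rff w b x')%:E))%E) ->
  0 < lambda ->
  (* L convex in its first argument, with derivative dL in that argument *)
  (forall (y u v t : R), 0 <= t <= 1 ->
      L (t * u + (1 - t) * v) y <= t * L u y + (1 - t) * L v y) ->
  (forall u y : R, is_derive u (1 : R) (fun v : R => L v y) (dL u y)) ->
  (forall u y, `|dL u y| < M) ->
  (forall y u v, `|L u y - L v y| <= Lc * `|u - v|) ->
  (forall y u v, `|dL u y - dL v y| <= Lc * `|u - v|) ->
  (forall x x', K x x' <= kappa) ->
  (forall (w : d.-tuple R) (b : R) (x x' : 'rV[R]_d), `|rff w b x * rff w b x'| <= phib) ->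
  0 < gamma < lambda^-1 ->
  forall (t : nat) (x : 'rV[R]_d),
    (Eiter P t (fun s =>
      (`|(iterates xs ys dL K gamma lambda s).1 x
         - (iterates xs ys dL K gamma lambda s).2 x| ^+ 2)%:E)
    <= (M ^+ 2 * (Num.sqrt kappa + Num.sqrt phib) ^+ 2 * gamma / lambda)%:E)%E.
Proof.
move=> N_gt0 _ _ _ _ K_feature lambda_gt0 _ _ dL_lt _ _ _ feature_bound.
move=> /andP[gamma_gt0 gamma_lt] t x.
have gl_gt0 : 0 < gamma * lambda by rewrite mulr_gt0.
have gl_lt1 : gamma * lambda < 1 by rewrite -ltr_pdivlMr // div1r.
have S_ge2 : 2 <= (Num.sqrt kappa + Num.sqrt phib) ^+ 2.
  have phib_ge2 := rff_product_bound_ge2 _ feature_bound.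
  have := sqrtr_ge0 kappa; have := sqrtr_ge0 phib.
  have := @sqr_sqrtr _ phib (le_trans _ phib_ge2); nra.
apply: Eiter_sqr_gap_iterates_le => //.
- by move=> a; exact: K_feature.
- nra.
- apply: divr_ge0 (ltW lambda_gt0); apply: mulr_ge0 (ltW gamma_gt0).
  exact: mulr_ge0 (sqr_ge0 M) (sqr_ge0 _).
- by move=> u y; apply: sgd_noise_le.
Qed.
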